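(* Let $\mathcal M$ be a full subcategory of $\mathrm{Mod}\text{-}R$ closed under submodules. For a module $M\in\mathcal M$ the following are equivalent: (1) there is a left almost split morphism $f:M\to\bar M$ in $\mathcal M$ that is not a monomorphism; (2) there is a left almost split morphism $g:M\to\bar M$ in $\mathcal M$ that is an epimorphism. Moreover, a strong left almost split morphism in $\mathcal M$ is either a monomorphism or an epimorphism.
   Context: $R$ is a unital associative ring and $\mathrm{Mod}\text{-}R$ the category of right $R$-modules. In a full subcategory $\mathcal M$, a morphism $f:X\to Y$ is left almost split if it is not a split monomorphism and every $g:X\to Z$ in $\mathcal M$ that is not a split monomorphism factors as $g=hf$ for some $h:Y\to Z$ in $\mathcal M$; it is strong left almost split if this $h$ is unique for every such $g$. *)

From HB Require Import structures.
From mathcomp Require Import all_boot all_algebra.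
Set Implicit Arguments. Unset Strict Implicit. Unset Printing Implicit Defensive.
Import GRing.Theory.
Local Open Scope ring_scope.

(* Right R-modules are modelled as left modules over the converse ring R^c. A full subcategory
   of Mod-R is given by a predicate Mc on modules (all linear maps between
   its objects are morphisms). *)

Section AlmostSplit.
Variable R : pzRingType.
Notation modR := (lmodType R^c).

Definition surj (X Y : Type) (f : X -> Y) := forall y, exists x, f x = y.

Definition split_mono (X Y : modR) (f : {linear X -> Y}) : Prop :=
  exists r : {linear Y -> X}, forall x, r (f x) = x.

Definition closed_under_submodules (Mc : modR -> Prop) : Prop :=
  forall (N M : modR) (i : {linear N -> M}), injective i -> Mc M -> Mc N.

Definition left_almost_split (Mc : modR -> Prop) (X Y : modR)
    (f : {linear X -> Y}) : Prop :=
  ~ split_mono f /\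
  forall (Z : modR), Mc Z -> forall g : {linear X -> Z}, ~ split_mono g ->
    exists h : {linear Y -> Z}, forall x, g x = h (f x).

Definition strong_left_almost_split (Mc : modR -> Prop) (X Y : modR)
    (f : {linear X -> Y}) : Prop :=
  left_almost_split Mc f /\
  forall (Z : modR), Mc Z -> forall g : {linear X -> Z}, ~ split_mono g ->
    forall h h' : {linear Y -> Z},
      (forall x, g x = h (f x)) -> (forall x, g x = h' (f x)) ->
      forall y, h y = h' y.
End AlmostSplit.

From HB Require Import structures.
From mathcomp Require Import all_boot all_algebra.
From mathcomp Require Import boolp.
Set Implicit Arguments. Unset Strict Implicit. Unset Printing Implicit Defensive.
Import GRing.Theory.
Local Open Scope ring_scope.

(* Everything rests on the factorisation [f = incl \o corestr f] through the
   image, which lies in the subcategory since it is closed under submodules.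
   Factoring a left almost split [f] through [corestr f] gives a left almost
   split epimorphism, and a left almost split epimorphism cannot be
   injective, as it would then be an isomorphism, hence split. For a
   strong left almost split [f] that is not injective, [corestr f] factors as
   [h \o f]; then [incl \o h] and the identity both factor [f] through itself,
   so uniqueness forces [incl \o h = id] and [f] is onto. *)

Section Image.
Variables (S : pzRingType) (X Y : lmodType S) (f : {linear X -> Y}).

Definition in_image : pred Y := fun y => `[< exists x, f x = y >].

Lemma in_imageP y : reflect (exists x, f x = y) (in_image y).
Proof. exact: asboolP. Qed.

Lemma in_image_submod_closed : subsemimod_closed in_image.
Proof.
apply: GRing.submod_closed_semi; split.
  by apply/in_imageP; exists 0; rewrite linear0.
move=> a _ _ /in_imageP[x <-] /in_imageP[x' <-]; apply/in_imageP.
by exists (a *: x + x'); rewrite linearD linearZ.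
Qed.

Record image_mod := ImageMod { image_incl : Y; _ : in_image image_incl }.

HB.instance Definition _ := [isSub for image_incl].
HB.instance Definition _ := [Choice of image_mod by <:].
HB.instance Definition _ :=
  GRing.SubChoice_isSubLmodule.Build S Y in_image image_mod in_image_submod_closed.

Lemma image_incl_is_linear : linear image_incl.
Proof. by []. Qed.

HB.instance Definition _ :=
  GRing.isLinear.Build S image_mod Y _ image_incl image_incl_is_linear.

Lemma image_incl_inj : injective image_incl.
Proof. exact: val_inj. Qed.

Definition corestr (x : X) : image_mod :=
  ImageMod (introT (in_imageP (f x)) (ex_intro _ x erefl)).

Lemma corestr_is_linear : linear corestr.
Proof. by move=> a x y; apply: val_inj; rewrite /= linearD linearZ. Qed.

HB.instance Definition _ := GRing.isLinear.Build S X image_mod _ corestr corestr_is_linear.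

Lemma corestr_surj : surj corestr.
Proof.
move=> [y y_im]; have /in_imageP[x fx] := y_im.
by exists x; apply: val_inj.
Qed.

Lemma corestr_inj : injective corestr -> injective f.
Proof. by move=> inj_c x x' fxx'; apply: inj_c; apply: val_inj. Qed.

End Image.

Arguments image_incl {S X Y} f.
Arguments image_incl_inj {S X Y} f.

Section LinearInverse.
Variables (S : pzRingType) (X Y : lmodType S) (g : {linear X -> Y}).
Hypothesis g_surj : surj g.

Definition linear_inv (y : Y) : X := sval (cid (g_surj y)).

Lemma linear_invK : cancel linear_inv g.
Proof. by move=> y; rewrite /linear_inv; case: cid. Qed.

Hypothesis g_inj : injective g.

Lemma linear_inv_is_linear : linear linear_inv.
Proof. by move=> a y y'; apply: g_inj; rewrite linearD linearZ !linear_invK. Qed.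

Lemma linear_invKV : cancel g linear_inv.
Proof. by move=> x; apply: g_inj; rewrite linear_invK. Qed.

End LinearInverse.

Section AlmostSplitFactorization.
Variables (R : pzRingType) (Mc : lmodType R^c -> Prop).
Hypothesis Mc_sub : closed_under_submodules Mc.

Lemma split_mono_inj (X Y : lmodType R^c) (f : {linear X -> Y}) :
  split_mono f -> injective f.
Proof. by case=> r rK; apply: can_inj rK. Qed.

Lemma bij_split_mono (X Y : lmodType R^c) (f : {linear X -> Y})
    (f_inj : injective f) (f_surj : surj f) : split_mono f.
Proof.
pose inv_lin := GRing.isLinear.Build _ _ _ _ _ (linear_inv_is_linear f_surj f_inj).
by exists (HB.pack_for {linear Y -> X} (linear_inv f_surj) inv_lin); apply: linear_invKV.
Qed.

Lemma closed_image (X Y : lmodType R^c) (f : {linear X -> Y}) :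
  Mc Y -> Mc (image_mod f).
Proof. exact: Mc_sub (image_incl_inj f). Qed.

Lemma left_almost_split_corestr (X Y : lmodType R^c) (f : {linear X -> Y}) :
  left_almost_split Mc f -> ~ injective f -> left_almost_split Mc (corestr f).
Proof.
move=> [_ f_factors] f_ninj; split.
  by move/split_mono_inj/corestr_inj.
move=> Z MZ g g_nsplit; have [h gE] := f_factors Z MZ g g_nsplit.
by exists (h \o image_incl f) => x; rewrite gE.
Qed.

Lemma left_almost_split_surj_not_inj (X Y : lmodType R^c) (f : {linear X -> Y}) :
  left_almost_split Mc f -> surj f -> ~ injective f.
Proof. by move=> [f_nsplit _] f_surj f_inj; apply/f_nsplit/bij_split_mono. Qed.

Lemma strong_left_almost_split_surj (X Y : lmodType R^c) (f : {linear X -> Y}) :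
  Mc Y -> strong_left_almost_split Mc f -> ~ injective f -> surj f.
Proof.
move=> MY [[f_nsplit f_factors] f_unique] f_ninj.
have c_nsplit : ~ split_mono (corestr f) by move/split_mono_inj/corestr_inj.
have [h cE] := f_factors _ (closed_image f MY) _ c_nsplit.
have retr y : image_incl f (h y) = y.
  by apply: (f_unique Y MY f f_nsplit (image_incl f \o h) idfun) => x //=; rewrite -cE.
move=> y; have [x cx] := corestr_surj (h y).
by exists x; rewrite -(retr y) -cx.
Qed.

End AlmostSplitFactorization.

Theorem lemma4p3 (R : pzRingType) (Mc : lmodType R^c -> Prop) :
  closed_under_submodules Mc ->
  (forall M : lmodType R^c, Mc M ->
     ((exists (Mb : lmodType R^c) (f : {linear M -> Mb}),
          Mc Mb /\ left_almost_split Mc f /\ ~ injective f) <->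
      (exists (Mb : lmodType R^c) (g : {linear M -> Mb}),
          Mc Mb /\ left_almost_split Mc g /\ surj g))) /\
  (forall (X Y : lmodType R^c) (f : {linear X -> Y}),
     Mc X -> Mc Y -> strong_left_almost_split Mc f ->
     injective f \/ surj f).
Proof.
move=> Mc_sub; split=> [M _|X Y f _ MY f_strong]; first split.
- move=> [Mb [f [MMb [f_las f_ninj]]]].
  exists (image_mod f), (corestr f).
  split; first exact: closed_image.
  by split; [apply: left_almost_split_corestr | apply: corestr_surj].
- move=> [Mb [g [MMb [g_las g_surj]]]].
  exists Mb, g; do 2!split=> //.
  exact: left_almost_split_surj_not_inj g_las g_surj.
- have [f_inj|f_ninj] := pselect (injective f); first exact: or_introl.
  by right; apply: (strong_left_almost_split_surj Mc_sub MY f_strong).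
Qed.
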